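(* Let $\mathcal R$ be an energy relation under energy constraint $E$ (of an ETP or a finite composition of such). Then the greatest fixpoint $\nu\mathcal R^{-1}$ of the map $I\mapsto\mathcal R^{-1}(I)$ on the complete lattice $(\mathcal I(E),\supseteq)$ exists, is a closed (possibly empty) interval, and $$\nu\mathcal R^{-1}=\bigcap_{i\in\mathbb N}(\mathcal R^{-1})^i(E).$$ Moreover, $\nu\mathcal R^{-1}$ is the largest subset $S\subseteq E$ such that for every $w_0\in S$ there is $w_1\in S$ with $\mathcal R(w_0,w_1)$. In particular, if $\mathcal R$ is the energy relation of a cycle $\mathcal C$ (an ETP, or concatenation of ETPs, starting and ending at the same macro-state), then $\nu\mathcal R^{-1}$ is exactly the set of initial energy levels $w_0\in E$ from which there is an infinite run iterating $\mathcal C$ forever that satisfies $E$.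
   Context: An energy timed automaton (ETA) is a tuple $\langle S,S_0,X,\mathrm{Inv},r,T\rangle$ with finite states $S$, initial states $S_0$, clocks $X$, invariants $\mathrm{Inv}(s)$ that are conjunctions of closed clock constraints $x\bowtie c$ ($\bowtie\in\{\le,\ge,=\}$, $c$ rational), rates $r\colon S\to\mathbb Q$, and transitions $(s,g,u,z,s')$ with closed guard $g$, update $u\in\mathbb Q$, reset set $z\subseteq X$. A run alternates delays $d\ge0$ in a state $s$ (clocks increase by $d$, invariant must hold, energy increases by $d\cdot r(s)$) and transitions (guard must hold, clocks in $z$ reset to $0$, energy increases by $u$). An energy constraint is a closed interval $E$ with rational bounds; a run satisfies $E$ if all its energy levels lie in $E$. $\mathcal I(E)$ is the set of closed subintervals of $E$ (including $\emptyset$). An energy timed path (ETP) from $s_0$ to $s_n$ is an ETA whose states $s_0,\dots,s_n$ are linked by exactly one transition from $s_i$ to $s_{i+1}$ each. Its energy relation $\mathcal R^E_{\mathcal P}(w_0,w_1)$ holds iff there is a finite run from $(s_0,\mathbf 0,w_0)$ to $(s_n,\mathbf 0,w_1)$ satisfying $E$; compositions of energy relations correspond to concatenating paths, and $\mathcal R^k$ is the $k$-fold composition. For $I\in\mathcal I(E)$, $\mathcal R^{-1}(I)=\{w_0\in E\mid \exists w_1\in I.\ \mathcal R(w_0,w_1)\}$. Iterating a cycle means concatenating runs of it, each starting and ending with all clocks equal to $0$, the final energy of one being the initial energy of the next. *)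

From Stdlib Require Import Reals QArith Qreals List.
Import ListNotations.
Open Scope R_scope.

(** Clocks are named by natural numbers; a valuation gives every clock a
    nonnegative real value.  The clock set X of an ETP is an explicit list. *)
Definition valuation := nat -> R.

Inductive cmp := CLe | CGe | CEq.

Record constr := mkConstr { c_clock : nat; c_op : cmp; c_const : Q }.

Definition sat_atom (v : valuation) (k : constr) : Prop :=
  match c_op k with
  | CLe => v (c_clock k) <= Q2R (c_const k)
  | CGe => v (c_clock k) >= Q2R (c_const k)
  | CEq => v (c_clock k) = Q2R (c_const k)
  end.

Definition sat (v : valuation) (g : list constr) : Prop :=
  forall k, In k g -> sat_atom v k.

Definition delay (v : valuation) (d : R) : valuation := fun x => v x + d.
Definition reset (z : list nat) (v : valuation) : valuation :=
  fun x => if in_dec Nat.eq_dec x z then 0 else v x.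

Record loc := mkLoc { inv : list constr; rate : Q }.
Record edge := mkEdge { guard : list constr; upd : Q; rst : list nat }.

(** An energy timed path s_0 -> s_1 -> ... -> s_n: clock set, the first state
    s_0, and the list of pairs (transition s_i -> s_{i+1}, state s_{i+1}). *)
Record ETP := mkETP { clocks : list nat; loc0 : loc; steps : list (edge * loc) }.

Definition inE (lo hi : Q) (w : R) : Prop := Q2R lo <= w <= Q2R hi.

(** In each state one delay d >= 0 is taken (consecutive delays merge). *)
Fixpoint runFrom (lo hi : Q) (X : list nat) (l : loc) (rest : list (edge * loc))
  (v : valuation) (w w1 : R) {struct rest} : Prop :=
  exists d, 0 <= d /\
    (forall t, 0 <= t <= d ->
       sat (delay v t) (inv l) /\ inE lo hi (w + t * Q2R (rate l))) /\
    match rest with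
    | [] => (forall x, In x X -> delay v d x = 0) /\ w1 = w + d * Q2R (rate l)
    | (e, l') :: rest' =>
        let v' := delay v d in
        let w' := w + d * Q2R (rate l) in
        sat v' (guard e) /\ inE lo hi (w' + Q2R (upd e)) /\
        runFrom lo hi X l' rest' (reset (rst e) v') (w' + Q2R (upd e)) w1
    end.

Definition zeroV : valuation := fun _ => 0.

Definition etpRel (lo hi : Q) (P : ETP) (w0 w1 : R) : Prop :=
  runFrom lo hi (clocks P) (loc0 P) (steps P) zeroV w0 w1.

Definition relComp (R1 R2 : R -> R -> Prop) (w0 w2 : R) : Prop :=
  exists w1, R1 w0 w1 /\ R2 w1 w2.

Inductive isEnergyRel (lo hi : Q) : (R -> R -> Prop) -> Prop :=
| er_etp : forall P, isEnergyRel lo hi (etpRel lo hi P)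
| er_comp : forall R1 R2, isEnergyRel lo hi R1 -> isEnergyRel lo hi R2 ->
    isEnergyRel lo hi (relComp R1 R2).

Definition seteq (A B : R -> Prop) : Prop := forall x, A x <-> B x.
Definition subset (A B : R -> Prop) : Prop := forall x, A x -> B x.

Definition Eset (lo hi : Q) : R -> Prop := inE lo hi.

Definition closedSubint (lo hi : Q) (I : R -> Prop) : Prop :=
  (forall x, ~ I x) \/
  exists a b, a <= b /\ seteq I (fun x => a <= x <= b) /\
              subset (fun x => a <= x <= b) (Eset lo hi).

Definition preRel (lo hi : Q) (Rl : R -> R -> Prop) (I : R -> Prop) : R -> Prop :=
  fun w0 => inE lo hi w0 /\ exists w1, I w1 /\ Rl w0 w1.

Fixpoint preIter (lo hi : Q) (Rl : R -> R -> Prop) (i : nat) : R -> Prop :=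
  match i with
  | O => Eset lo hi
  | S j => preRel lo hi Rl (preIter lo hi Rl j)
  end.

(** initial energies from which the cycle can be iterated forever within E:
    an infinite chain of runs, each from clocks 0 to clocks 0, energies glued *)
Definition iterForever (Rl : R -> R -> Prop) (w0 : R) : Prop :=
  exists w : nat -> R, w O = w0 /\ forall i, Rl (w i) (w (S i)).

(** Every energy relation is polyhedral: a run is described by finitely many
    linear constraints on the delays, clock values and energies (the clock and
    energy constraints along a delay are convex, so it suffices to impose them
    at its two ends), and the existentially quantified delays and intermediate
    energies are eliminated by Fourier-Motzkin.  Hence each [(R^{-1})^i(E)] is
    a polyhedral subset of the bounded interval [E], i.e. a closed interval,
    and these intervals decrease.  Their intersection [nu] is a closed
    interval; by compactness (nested closed intervals), every [w0] in [nu] has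
    a successor in [nu], because the nonempty closed intervals
    [{w1 in (R^{-1})^i(E) | R(w0, w1)}] decrease.  Conversely every set [S]
    in [E] in which each point has a successor lies in every
    [(R^{-1})^i(E)], so [nu] is the greatest such set, and infinite
    iterations are obtained by choosing successors. *)
From Stdlib Require Import Reals QArith Qreals List Lra Psatz ClassicalEpsilon Classical.
Import ListNotations.
Open Scope R_scope.

Definition env := nat -> R.

Definition aform := (list (nat * R) * R)%type.

Fixpoint lsum (l : list (nat * R)) (e : env) : R :=
  match l with [] => 0 | (i, c) :: l' => c * e i + lsum l' e end.

Definition aeval (f : aform) (e : env) : R := lsum (fst f) e + snd f.

Definition aadd (f g : aform) : aform := (fst f ++ fst g, snd f + snd g).

Definition ascale (a : R) (f : aform) : aform :=
  (map (fun p => (fst p, a * snd p)) (fst f), a * snd f).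

Lemma aeval_add f g e : aeval (aadd f g) e = aeval f e + aeval g e.
Proof.
  unfold aeval, aadd; simpl.
  induction (fst f) as [|[i c] l IH]; simpl; lra.
Qed.

Lemma aeval_scale a f e : aeval (ascale a f) e = a * aeval f e.
Proof.
  unfold aeval, ascale; simpl.
  induction (fst f) as [|[i c] l IH]; simpl; lra.
Qed.

Definition affine (h : env -> R) : Prop := exists f : aform, forall e, h e = aeval f e.

Lemma affine_const c : affine (fun _ => c).
Proof. exists ([], c); intros; unfold aeval; simpl; ring. Qed.

Lemma affine_var i : affine (fun e => e i).
Proof. exists ([(i, 1)], 0); intros; unfold aeval; simpl; ring. Qed.

Lemma affine_add h1 h2 : affine h1 -> affine h2 -> affine (fun e => h1 e + h2 e).
Proof.
  intros [f1 H1] [f2 H2]; exists (aadd f1 f2); intros e.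
  rewrite aeval_add, H1, H2; ring.
Qed.

Lemma affine_mulr h a : affine h -> affine (fun e => h e * a).
Proof. intros [f H]; exists (ascale a f); intros e; rewrite aeval_scale, H; ring. Qed.

Lemma affine_sub h1 h2 : affine h1 -> affine h2 -> affine (fun e => h1 e - h2 e).
Proof.
  intros H1 H2; destruct (affine_add _ _ H1 (affine_mulr _ (-1) H2)) as [f Hf].
  exists f; intros e; rewrite <- Hf; ring.
Qed.

Lemma affine_aeval_comp (s : env -> env) f :
  (forall k, affine (fun e => s e k)) -> affine (fun e => aeval f (s e)).
Proof.
  intros Hs; unfold aeval; apply affine_add; [|apply affine_const].
  induction (fst f) as [|[i c] l IH]; simpl; [apply affine_const|].
  apply affine_add; [|exact IH].
  destruct (Hs i) as [g Hg]; exists (ascale c g); intros e; rewrite aeval_scale, Hg; ring.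
Qed.

Ltac affine_auto :=
  repeat first [apply affine_add | apply affine_mulr | apply affine_var | apply affine_const].

Definition polyhedral (P : env -> Prop) : Prop :=
  exists L : list aform, forall e, P e <-> (forall f, In f L -> aeval f e <= 0).

Lemma polyhedral_ext P Q : (forall e, P e <-> Q e) -> polyhedral P -> polyhedral Q.
Proof. intros H [L HL]; exists L; intros e; rewrite <- H; apply HL. Qed.

Lemma polyhedral_true : polyhedral (fun _ => True).
Proof. exists []; simpl; tauto. Qed.

Lemma polyhedral_and P Q : polyhedral P -> polyhedral Q -> polyhedral (fun e => P e /\ Q e).
Proof.
  intros [L1 H1] [L2 H2]; exists (L1 ++ L2); intros e; rewrite H1, H2.
  split.
  - intros [A B] f Hf; apply in_app_or in Hf as [Hf|Hf]; auto.
  - intros A; split; intros f Hf; apply A, in_or_app; auto.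
Qed.

Lemma polyhedral_le h1 h2 : affine h1 -> affine h2 -> polyhedral (fun e => h1 e <= h2 e).
Proof.
  intros H1 H2; destruct (affine_sub _ _ H1 H2) as [f Hf]; exists [f]; intros e.
  split.
  - intros A g [<-|[]]; rewrite <- Hf; lra.
  - intros A; specialize (A f (or_introl eq_refl)); rewrite <- Hf in A; lra.
Qed.

Lemma polyhedral_eq h1 h2 : affine h1 -> affine h2 -> polyhedral (fun e => h1 e = h2 e).
Proof.
  intros H1 H2.
  eapply polyhedral_ext; [|exact (polyhedral_and _ _ (polyhedral_le _ _ H1 H2) (polyhedral_le _ _ H2 H1))].
  intros e; simpl; lra.
Qed.

Lemma polyhedral_forall_in {A} (l : list A) (F : A -> env -> Prop) :
  (forall a, polyhedral (F a)) -> polyhedral (fun e => forall a, In a l -> F a e).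
Proof.
  intros H; induction l as [|a l IH].
  - eapply polyhedral_ext; [|exact polyhedral_true]; simpl; tauto.
  - eapply polyhedral_ext; [|exact (polyhedral_and _ _ (H a) IH)]; intros e; simpl.
    split; [intros [B C] x [<-|Hx]; auto | intros B; split; auto].
Qed.

Lemma polyhedral_comp (s : env -> env) P :
  (forall k, affine (fun e => s e k)) -> polyhedral P -> polyhedral (fun e => P (s e)).
Proof.
  intros Hs [L HL].
  eapply polyhedral_ext; [intros e; symmetry; exact (HL (s e))|].
  apply (polyhedral_forall_in L (fun f e => aeval f (s e) <= 0)); intros f.
  apply polyhedral_le; [apply affine_aeval_comp; exact Hs | apply affine_const].
Qed.

Lemma Rmult_le0_iff_upper c r d : 0 < c -> (c * d + r <= 0 <-> d <= - r / c).
Proof.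
  intros Hc; replace (- r / c) with (- r * / c) by reflexivity.
  assert (Hcc : c * / c = 1) by (field; lra).
  split; intros Hle.
  - apply (Rmult_le_reg_l c); [exact Hc|]; rewrite <- Rmult_assoc, (Rmult_comm c (- r)), Rmult_assoc, Hcc; lra.
  - apply (Rmult_le_compat_l c) in Hle; [|lra].
    rewrite <- Rmult_assoc, (Rmult_comm c (- r)), Rmult_assoc, Hcc in Hle; lra.
Qed.

Lemma Rmult_le0_iff_lower c r d : c < 0 -> (c * d + r <= 0 <-> - r / c <= d).
Proof.
  intros Hc.
  assert (Hu := Rmult_le0_iff_upper (- c) r (- d) ltac:(lra)).
  replace (- c * - d) with (c * d) in Hu by ring.
  replace (- r / - c) with (- (- r / c)) in Hu by (field; lra).
  rewrite Hu; lra.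
Qed.

(** * Fourier-Motzkin elimination of the variable [e 0] *)

Definition scons (d : R) (e : env) : env :=
  fun k => match k with O => d | S k => e k end.

Fixpoint lcoef0 (l : list (nat * R)) : R :=
  match l with
  | [] => 0
  | (i, c) :: l' => (match i with O => c | _ => 0 end) + lcoef0 l'
  end.

Fixpoint lshift (l : list (nat * R)) : list (nat * R) :=
  match l with
  | [] => []
  | (O, _) :: l' => lshift l'
  | (S j, c) :: l' => (j, c) :: lshift l'
  end.

Definition coef0 (f : aform) : R := lcoef0 (fst f).
Definition drop0 (f : aform) : aform := (lshift (fst f), snd f).

Lemma aeval_scons f d e : aeval f (scons d e) = coef0 f * d + aeval (drop0 f) e.
Proof.
  unfold aeval, coef0, drop0; simpl.
  induction (fst f) as [|[[|i] c] l IH]; simpl; lra.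
Qed.

Definition Rpos_b (r : R) : bool := if Rlt_dec 0 r then true else false.
Definition Rneg_b (r : R) : bool := if Rlt_dec r 0 then true else false.
Definition Rzero_b (r : R) : bool := if Req_dec_T r 0 then true else false.

Definition fm_combine (p n : aform) : aform :=
  aadd (ascale (coef0 p) (drop0 n)) (ascale (- coef0 n) (drop0 p)).

Definition fm_elim (L : list aform) : list aform :=
  map drop0 (filter (fun f => Rzero_b (coef0 f)) L) ++
  flat_map (fun p => map (fm_combine p) (filter (fun f => Rneg_b (coef0 f)) L))
           (filter (fun f => Rpos_b (coef0 f)) L).

Lemma in_fm_elim g L :
  In g (fm_elim L) <->
  (exists f, In f L /\ coef0 f = 0 /\ g = drop0 f) \/
  (exists p n, In p L /\ 0 < coef0 p /\ In n L /\ coef0 n < 0 /\ g = fm_combine p n).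
Proof.
  unfold fm_elim, Rpos_b, Rneg_b, Rzero_b; rewrite in_app_iff, in_map_iff, in_flat_map.
  split.
  - intros [[f [<- Hf]]|[p [Hp Hg]]].
    + apply filter_In in Hf as [Hf Hz].
      destruct (Req_dec_T (coef0 f) 0); [|discriminate]; left; eauto.
    + apply in_map_iff in Hg as [n [<- Hn]].
      apply filter_In in Hp as [Hp Pp]; apply filter_In in Hn as [Hn Nn].
      destruct (Rlt_dec 0 (coef0 p)), (Rlt_dec (coef0 n) 0); try discriminate.
      right; exists p, n; auto.
  - intros [[f [Hf [Hz ->]]]|[p [n [Hp [Pp [Hn [Nn ->]]]]]]].
    + left; exists f; split; auto; apply filter_In; split; auto.
      destruct (Req_dec_T (coef0 f) 0); tauto.
    + right; exists p; split.
      * apply filter_In; split; auto; destruct (Rlt_dec 0 (coef0 p)); tauto.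
      * apply in_map, filter_In; split; auto; destruct (Rlt_dec (coef0 n) 0); tauto.
Qed.

Lemma fm_elim_sound L d e :
  (forall f, In f L -> aeval f (scons d e) <= 0) ->
  forall g, In g (fm_elim L) -> aeval g e <= 0.
Proof.
  intros H g Hg; apply in_fm_elim in Hg as [[f [Hf [Hz ->]]]|[p [n [Hp [Pp [Hn [Nn ->]]]]]]].
  - specialize (H f Hf); rewrite aeval_scons, Hz in H; lra.
  - pose proof (H p Hp) as A; pose proof (H n Hn) as B; rewrite aeval_scons in A, B.
    unfold fm_combine; rewrite aeval_add, !aeval_scale; nra.
Qed.

Lemma exists_between (ls us : list R) :
  (forall l u, In l ls -> In u us -> l <= u) ->
  exists d, (forall l, In l ls -> l <= d) /\ (forall u, In u us -> d <= u).
Proof.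
  induction ls as [|l ls IH]; intros H.
  - induction us as [|u us IHu]; [exists 0; simpl; tauto|].
    destruct IHu as [d [_ Hd]]; [simpl; tauto|].
    exists (Rmin u d); split; [simpl; tauto|].
    intros x [<-|Hx]; [apply Rmin_l | eapply Rle_trans; [apply Rmin_r | auto]].
  - destruct IH as [d [Hd1 Hd2]]; [intros; apply H; simpl; auto|].
    exists (Rmax l d); split.
    + intros x [<-|Hx]; [apply Rmax_l | eapply Rle_trans; [apply Hd1; auto | apply Rmax_r]].
    + intros u Hu; apply Rmax_lub; auto; apply H; simpl; auto.
Qed.

(* Each constraint with [coef0 f <> 0] bounds [d] by [- aeval (drop0 f) e / coef0 f];
   the combined constraints say that every lower bound is below every upper one. *)
Lemma fm_elim_complete L e :
  (forall g, In g (fm_elim L) -> aeval g e <= 0) ->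
  exists d, forall f, In f L -> aeval f (scons d e) <= 0.
Proof.
  intros H.
  set (bound := fun f => - aeval (drop0 f) e / coef0 f).
  destruct (exists_between (map bound (filter (fun f => Rneg_b (coef0 f)) L))
                           (map bound (filter (fun f => Rpos_b (coef0 f)) L))) as [d [Hlow Hup]].
  { intros l u Hl Hu; apply in_map_iff in Hl as [n [<- Hn]]; apply in_map_iff in Hu as [p [<- Hp]].
    apply filter_In in Hn as [Hn Nn]; apply filter_In in Hp as [Hp Pp].
    unfold Rpos_b, Rneg_b in *.
    destruct (Rlt_dec 0 (coef0 p)) as [Pp'|]; [|discriminate].
    destruct (Rlt_dec (coef0 n) 0) as [Nn'|]; [|discriminate].
    assert (Hc := H _ (proj2 (in_fm_elim _ _) (or_intror (ex_intro _ p (ex_intro _ n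
                      (conj Hp (conj Pp' (conj Hn (conj Nn' eq_refl))))))))).
    unfold fm_combine in Hc; rewrite aeval_add, !aeval_scale in Hc.
    apply Rmult_le0_iff_lower; [exact Nn'|]; unfold bound.
    assert (Hscaled : coef0 p * (coef0 n * (- aeval (drop0 p) e / coef0 p) + aeval (drop0 n) e) <= 0)
      by (field_simplify; lra).
    nra. }
  exists d; intros f Hf; rewrite aeval_scons.
  destruct (total_order_T (coef0 f) 0) as [[Hn|Hz]|Hp].
  - apply Rmult_le0_iff_lower; [exact Hn|]; apply (Hlow (bound f)), in_map, filter_In; split; auto.
    unfold Rneg_b; destruct (Rlt_dec (coef0 f) 0); tauto.
  - rewrite Hz, Rmult_0_l, Rplus_0_l; apply H, in_fm_elim; left; exists f; auto.
  - apply Rmult_le0_iff_upper; [exact Hp|]; apply (Hup (bound f)), in_map, filter_In; split; auto.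
    unfold Rpos_b; destruct (Rlt_dec 0 (coef0 f)); tauto.
Qed.

Lemma polyhedral_exists P : polyhedral P -> polyhedral (fun e => exists d, P (scons d e)).
Proof.
  intros [L HL]; exists (fm_elim L); intros e; split.
  - intros [d Hd]; apply fm_elim_sound with d; apply HL, Hd.
  - intros H; destruct (fm_elim_complete L e H) as [d Hd]; exists d; apply HL, Hd.
Qed.

(** * Energy relations are polyhedral *)

Lemma polyhedral_inE lo hi h : affine h -> polyhedral (fun e => inE lo hi (h e)).
Proof. intros H; apply polyhedral_and; apply polyhedral_le; auto; apply affine_const. Qed.

Lemma polyhedral_sat g (v : env -> valuation) :
  (forall x, affine (fun e => v e x)) -> polyhedral (fun e => sat (v e) g).
Proof.
  intros H; apply (polyhedral_forall_in g (fun k e => sat_atom (v e) k)).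
  intros [x op c]; unfold sat_atom; simpl; destruct op.
  - apply polyhedral_le; auto; apply affine_const.
  - eapply polyhedral_ext; [|apply (polyhedral_le (fun _ => Q2R c) (fun e => v e x)); auto; apply affine_const].
    intros e; simpl; lra.
  - apply polyhedral_eq; auto; apply affine_const.
Qed.

(* Clock constraints are convex in the delay and the energy is affine in it. *)
Lemma delay_ok_iff_endpoints lo hi v g w r d : 0 <= d ->
  (forall t, 0 <= t <= d -> sat (delay v t) g /\ inE lo hi (w + t * r)) <->
  (sat (delay v 0) g /\ inE lo hi (w + 0 * r)) /\ (sat (delay v d) g /\ inE lo hi (w + d * r)).
Proof.
  intros Hd; split.
  - intros H; split; apply H; lra.
  - intros [[A B] [C D]] t Ht; split.
    + intros [x op c] Hk; specialize (A _ Hk); specialize (C _ Hk).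
      unfold sat_atom, delay in *; simpl in *; destruct op; lra.
    + unfold inE in *; destruct (Rle_dec 0 r); split; nra.
Qed.

Lemma polyhedral_delay_ok lo hi g r (D W : env -> R) (V : env -> valuation) :
  affine D -> affine W -> (forall x, affine (fun e => V e x)) ->
  polyhedral (fun e => 0 <= D e /\
    forall t, 0 <= t <= D e -> sat (delay (V e) t) g /\ inE lo hi (W e + t * r)).
Proof.
  intros HD HW HV.
  apply polyhedral_ext with (P := fun e => 0 <= D e /\
    ((sat (delay (V e) 0) g /\ inE lo hi (W e + 0 * r)) /\
     (sat (delay (V e) (D e)) g /\ inE lo hi (W e + D e * r)))).
  { intros e; split; intros [Hd Ht]; split; auto; apply (delay_ok_iff_endpoints lo hi _ _ _ _ _ Hd), Ht. }
  apply polyhedral_and; [apply polyhedral_le; auto; apply affine_const|].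
  unfold delay; apply polyhedral_and; apply polyhedral_and;
    solve [apply polyhedral_sat; intros; affine_auto; auto | apply polyhedral_inE; affine_auto; auto].
Qed.

Definition valuation_of (e : env) : valuation := fun k => e (S (S k)).

(* In [polyhedral_runFrom] the variables are laid out as
   [e 0 = w], [e 1 = w1], [e (2 + k) = v k]; a delay [d] is pushed in front. *)
Lemma polyhedral_delay_step lo hi (l : loc) (M : env -> Prop) :
  polyhedral M ->
  polyhedral (fun e => exists d, 0 <= d /\
    (forall t, 0 <= t <= d ->
       sat (delay (valuation_of e) t) (inv l) /\ inE lo hi (e 0%nat + t * Q2R (rate l))) /\
    M (scons d e)).
Proof.
  intros HM.
  eapply polyhedral_ext; [|apply polyhedral_exists with (P := fun e' => (0 <= e' 0%nat /\
    forall t, 0 <= t <= e' 0%nat ->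
       sat (delay (valuation_of (fun k => e' (S k))) t) (inv l) /\
       inE lo hi (e' 1%nat + t * Q2R (rate l))) /\ M e')].
  - intros e; split; intros [d Hd]; exists d; tauto.
  - apply polyhedral_and; [|exact HM].
    apply polyhedral_delay_ok; unfold valuation_of; intros; affine_auto.
Qed.

Lemma polyhedral_runFrom lo hi X rest : forall l,
  polyhedral (fun e => runFrom lo hi X l rest (valuation_of e) (e 0%nat) (e 1%nat)).
Proof.
  induction rest as [|[ed l'] rest IH]; intros l.
  - apply (polyhedral_delay_step lo hi l (fun e' =>
      (forall x, In x X -> delay (valuation_of (fun k => e' (S k))) (e' 0%nat) x = 0) /\
      e' 2%nat = e' 1%nat + e' 0%nat * Q2R (rate l))), polyhedral_and.
    + apply (polyhedral_forall_in X (fun x e' => delay (valuation_of (fun k => e' (S k))) (e' 0%nat) x = 0)).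
      intros x; apply polyhedral_eq; unfold delay, valuation_of; affine_auto.
    + apply polyhedral_eq; affine_auto.
  - set (V' := fun e' => delay (valuation_of (fun k => e' (S k))) (e' 0%nat)).
    set (w' := fun e' => e' 1%nat + e' 0%nat * Q2R (rate l) + Q2R (upd ed)).
    assert (HV' : forall x, affine (fun e' => V' e' x))
      by (intros x; unfold V', delay, valuation_of; affine_auto).
    assert (Hw' : affine w') by (unfold w'; affine_auto).
    apply (polyhedral_delay_step lo hi l (fun e' => sat (V' e') (guard ed) /\ inE lo hi (w' e') /\
      runFrom lo hi X l' rest (reset (rst ed) (V' e')) (w' e') (e' 2%nat))).
    apply polyhedral_and; [apply polyhedral_sat, HV'|].
    apply polyhedral_and; [apply polyhedral_inE, Hw'|].
    apply (polyhedral_comp (fun e' k => match k with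
             | O => w' e'
             | S O => e' 2%nat
             | S (S k) => reset (rst ed) (V' e') k end)
           (fun e => runFrom lo hi X l' rest (valuation_of e) (e 0%nat) (e 1%nat))); [|apply IH].
    intros [|[|k]]; [exact Hw' | affine_auto |].
    unfold reset; destruct (in_dec Nat.eq_dec k (rst ed)); [affine_auto | apply HV'].
Qed.

Definition polyhedral_rel (Rl : R -> R -> Prop) : Prop :=
  polyhedral (fun e => Rl (e 0%nat) (e 1%nat)).

Lemma polyhedral_rel_etpRel lo hi P : polyhedral_rel (etpRel lo hi P).
Proof.
  apply (polyhedral_comp (fun e k => match k with O => e 0%nat | S O => e 1%nat | _ => 0 end)
     (fun e => runFrom lo hi (clocks P) (loc0 P) (steps P) (valuation_of e) (e 0%nat) (e 1%nat))).
  - intros [|[|k]]; affine_auto.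
  - apply polyhedral_runFrom.
Qed.

Lemma polyhedral_rel_relComp R1 R2 :
  polyhedral_rel R1 -> polyhedral_rel R2 -> polyhedral_rel (relComp R1 R2).
Proof.
  intros H1 H2; apply polyhedral_exists with
    (P := fun e' => R1 (e' 1%nat) (e' 0%nat) /\ R2 (e' 0%nat) (e' 2%nat)).
  apply polyhedral_and.
  - apply (polyhedral_comp (fun e k => match k with O => e 1%nat | S O => e 0%nat | _ => 0 end)
      (fun e => R1 (e 0%nat) (e 1%nat))); [intros [|[|k]]; affine_auto | exact H1].
  - apply (polyhedral_comp (fun e k => match k with O => e 0%nat | S O => e 2%nat | _ => 0 end)
      (fun e => R2 (e 0%nat) (e 1%nat))); [intros [|[|k]]; affine_auto | exact H2].
Qed.

Lemma isEnergyRel_polyhedral lo hi Rl : isEnergyRel lo hi Rl -> polyhedral_rel Rl.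
Proof.
  induction 1; [apply polyhedral_rel_etpRel | apply polyhedral_rel_relComp; assumption].
Qed.

Lemma runFrom_inE lo hi X rest : forall l v w w1,
  runFrom lo hi X l rest v w w1 -> inE lo hi w /\ inE lo hi w1.
Proof.
  induction rest as [|[ed l'] rest IH]; intros l v w w1 [d [Hd [Ht M]]];
    destruct (Ht 0) as [_ Hw]; try lra; rewrite Rmult_0_l, Rplus_0_r in Hw.
  - destruct (Ht d) as [_ Hw1]; [lra|]; destruct M as [_ ->]; auto.
  - destruct M as [_ [_ M]]; apply IH in M; tauto.
Qed.

Lemma isEnergyRel_inE lo hi Rl : isEnergyRel lo hi Rl ->
  forall w0 w1, Rl w0 w1 -> inE lo hi w0 /\ inE lo hi w1.
Proof.
  induction 1 as [P|R1 R2 _ IH1 _ IH2]; intros w0 w1 Hr.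
  - exact (runFrom_inE _ _ _ _ _ _ _ _ Hr).
  - destruct Hr as [m [A B]]; apply IH1 in A; apply IH2 in B; tauto.
Qed.

(** * Polyhedral subsets of a bounded interval *)

Definition polyhedral1 (S : R -> Prop) : Prop := polyhedral (fun e => S (e 0%nat)).

Fixpoint lcoefs (l : list (nat * R)) : R :=
  match l with [] => 0 | (_, c) :: l' => c + lcoefs l' end.

Lemma aeval_const_env f x : aeval f (fun _ => x) = lcoefs (fst f) * x + snd f.
Proof. unfold aeval; induction (fst f) as [|[i c] l IH]; simpl; lra. Qed.

(* An interval [a, b] with [b < a] represents the empty set. *)
Lemma interval_meet_halfline a b c r :
  exists a' b', forall x, (a <= x <= b /\ c * x + r <= 0) <-> a' <= x <= b'.
Proof.
  destruct (total_order_T c 0) as [[Hc|Hc]|Hc].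
  - exists (Rmax a (- r / c)), b; intros x; rewrite (Rmult_le0_iff_lower _ _ _ Hc).
    unfold Rmax; destruct (Rle_dec a (- r / c)); lra.
  - subst c; destruct (Rle_dec r 0); [exists a, b | exists 1, 0]; intros x; lra.
  - exists a, (Rmin b (- r / c)); intros x; rewrite (Rmult_le0_iff_upper _ _ _ Hc).
    unfold Rmin; destruct (Rle_dec b (- r / c)); lra.
Qed.

Lemma interval_meet_aforms L : forall a b, exists a' b', forall x,
  (a <= x <= b /\ forall f, In f L -> aeval f (fun _ => x) <= 0) <-> a' <= x <= b'.
Proof.
  induction L as [|f L IH]; intros a b.
  - exists a, b; simpl; tauto.
  - destruct (interval_meet_halfline a b (lcoefs (fst f)) (snd f)) as [a1 [b1 H1]].
    destruct (IH a1 b1) as [a' [b' H']]; exists a', b'; intros x.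
    rewrite <- H', <- H1, <- aeval_const_env; simpl.
    split; [intros [Hx Hf]; auto | intros [[Hx Hf] HL]; split; auto].
    intros g [<-|Hg]; auto.
Qed.

Lemma polyhedral1_interval lo hi S : polyhedral1 S -> subset S (Eset lo hi) ->
  exists a b, forall x, S x <-> a <= x <= b.
Proof.
  intros [L HL] HSE.
  destruct (interval_meet_aforms L (Q2R lo) (Q2R hi)) as [a [b Hab]]; exists a, b; intros x.
  rewrite <- Hab, <- (HL (fun _ => x)).
  split; [intros Hx; split; [apply HSE|]; exact Hx | tauto].
Qed.

Lemma closedSubint_of_interval lo hi S a b :
  (forall x, S x <-> a <= x <= b) -> subset S (Eset lo hi) -> closedSubint lo hi S.
Proof.
  intros HS HSE; destruct (Rle_dec a b) as [Hab|Hab].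
  - right; exists a, b; split; [exact Hab|]; split; [exact HS|].
    intros x Hx; apply HSE, HS, Hx.
  - left; intros x Hx; apply HS in Hx; lra.
Qed.

Lemma nested_intervals_inter (a b : nat -> R) : (forall i j, a i <= b j) ->
  exists l u, l <= u /\ forall x, (forall i, a i <= x <= b i) <-> l <= x <= u.
Proof.
  intros Hab.
  destruct (completeness (fun y => exists i, y = a i)) as [l [Hl_ub Hl_least]];
    [exists (b O); intros y [i ->]; auto | exists (a O); eauto|].
  assert (Hlb : forall j, l <= b j) by (intros j; apply Hl_least; intros y [i ->]; auto).
  destruct (completeness (fun y => exists j, y = - b j)) as [m [Hm_ub Hm_least]];
    [exists (- l); intros y [j ->]; specialize (Hlb j); lra | exists (- b O); eauto|].
  exists l, (- m); split.
  - assert (m <= - l) by (apply Hm_least; intros y [j ->]; specialize (Hlb j); lra); lra.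
  - intros x; split.
    + intros Hx; split.
      * apply Hl_least; intros y [i ->]; apply Hx.
      * assert (m <= - x) by (apply Hm_least; intros y [j ->]; specialize (Hx j); lra); lra.
    + intros [Hlx Hxu] i; split.
      * assert (a i <= l) by (apply Hl_ub; eauto); lra.
      * assert (- b i <= m) by (apply Hm_ub; eauto); lra.
Qed.

Lemma decreasing_intervals_inter (J : nat -> R -> Prop) :
  (forall i, exists a b, forall x, J i x <-> a <= x <= b) ->
  (forall i x, J (S i) x -> J i x) -> (forall i, exists x, J i x) ->
  exists l u, l <= u /\ forall x, (forall i, J i x) <-> l <= x <= u.
Proof.
  intros Hint Hdec Hne.
  destruct (choice (fun i (p : R * R) => forall x, J i x <-> fst p <= x <= snd p)) as [ab Hab].
  { intros i; destruct (Hint i) as [a [b H]]; exists (a, b); exact H. }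
  assert (Hmono : forall i k, (i <= k)%nat -> forall x, J k x -> J i x)
    by (intros i k Hik; induction Hik; auto).
  destruct (nested_intervals_inter (fun i => fst (ab i)) (fun i => snd (ab i))) as [l [u [Hlu Hx]]].
  - intros i j; destruct (Hne (Nat.max i j)) as [y Hy].
    pose proof (proj1 (Hab i y) (Hmono i _ (Nat.le_max_l i j) y Hy)).
    pose proof (proj1 (Hab j y) (Hmono j _ (Nat.le_max_r i j) y Hy)); lra.
  - exists l, u; split; [exact Hlu|]; intros x; rewrite <- Hx.
    split; intros H i; apply Hab, H.
Qed.

(** * The greatest fixpoint of [I |-> R^{-1}(I)] *)

Definition preIter_meet (lo hi : Q) (Rl : R -> R -> Prop) : R -> Prop :=
  fun w => forall i : nat, preIter lo hi Rl i w.

Section GreatestFixpoint.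

Variables (lo hi : Q) (Rl : R -> R -> Prop).
Hypothesis Rl_polyhedral : polyhedral_rel Rl.
Hypothesis Rl_inE : forall w0 w1, Rl w0 w1 -> inE lo hi w0 /\ inE lo hi w1.

Lemma preIter_sub_E i : subset (preIter lo hi Rl i) (Eset lo hi).
Proof. destruct i; intros x Hx; [exact Hx | apply Hx]. Qed.

Lemma preIter_S_sub i : subset (preIter lo hi Rl (S i)) (preIter lo hi Rl i).
Proof.
  induction i as [|i IH]; intros x [Hx [w1 [Hw1 Hr]]]; [exact Hx|].
  split; [exact Hx|]; exists w1; split; [apply IH, Hw1 | exact Hr].
Qed.

Lemma preIter_polyhedral i : polyhedral1 (preIter lo hi Rl i).
Proof.
  induction i as [|i IH]; [apply polyhedral_inE; affine_auto|].
  apply polyhedral_and; [apply polyhedral_inE; affine_auto|].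
  apply polyhedral_exists with
    (P := fun e' => preIter lo hi Rl i (e' 0%nat) /\ Rl (e' 1%nat) (e' 0%nat)).
  apply polyhedral_and.
  - apply (polyhedral_comp (fun e _ => e 0%nat) (fun e => preIter lo hi Rl i (e 0%nat)));
      [intros; affine_auto | exact IH].
  - apply (polyhedral_comp (fun e k => match k with O => e 1%nat | _ => e 0%nat end)
      (fun e => Rl (e 0%nat) (e 1%nat))); [intros [|k]; affine_auto | exact Rl_polyhedral].
Qed.

Lemma post_fixpoint_sub_preIter_meet S : subset S (Eset lo hi) ->
  (forall w0, S w0 -> exists w1, S w1 /\ Rl w0 w1) -> subset S (preIter_meet lo hi Rl).
Proof.
  intros HSE Hpost x Hx i; revert x Hx; induction i as [|i IH]; intros x Hx; [apply HSE, Hx|].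
  split; [apply HSE, Hx|].
  destruct (Hpost x Hx) as [w1 [Hw1 Hr]]; exists w1; split; [apply IH, Hw1 | exact Hr].
Qed.

(* The successors of [w0] in [(R^{-1})^i(E)] form decreasing nonempty closed intervals. *)
Lemma preIter_meet_successor w0 : preIter_meet lo hi Rl w0 ->
  exists w1, preIter_meet lo hi Rl w1 /\ Rl w0 w1.
Proof.
  intros Hw0.
  destruct (decreasing_intervals_inter (fun i w1 => preIter lo hi Rl i w1 /\ Rl w0 w1))
    as [l [u [Hlu Hinter]]].
  - intros i; apply (polyhedral1_interval lo hi).
    + apply polyhedral_and; [apply preIter_polyhedral|].
      apply (polyhedral_comp (fun e k => match k with O => w0 | _ => e 0%nat end)
        (fun e => Rl (e 0%nat) (e 1%nat))); [intros [|k]; affine_auto | exact Rl_polyhedral].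
    + intros x [Hx _]; apply (preIter_sub_E i), Hx.
  - intros i x [Hx Hr]; split; [apply preIter_S_sub, Hx | exact Hr].
  - intros i; destruct (Hw0 (S i)) as [_ [w1 [Hw1 Hr]]]; exists w1; split; assumption.
  - exists l; assert (Hl : forall i, preIter lo hi Rl i l /\ Rl w0 l) by (apply Hinter; lra).
    split; [intros i; apply Hl | apply (Hl O)].
Qed.

Lemma preIter_meet_closedSubint : closedSubint lo hi (preIter_meet lo hi Rl).
Proof.
  destruct (classic (forall i, exists x, preIter lo hi Rl i x)) as [Hne|Hempty].
  - destruct (decreasing_intervals_inter (preIter lo hi Rl)) as [l [u [_ Hinter]]];
      [intros i; apply (polyhedral1_interval lo hi), preIter_sub_E; apply preIter_polyhedral
      | exact preIter_S_sub | exact Hne |].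
    apply closedSubint_of_interval with l u; [exact Hinter|].
    intros x Hx; apply (Hx O).
  - apply not_all_ex_not in Hempty as [i Hi].
    left; intros x Hx; apply Hi; exists x; apply Hx.
Qed.

Lemma preIter_meet_fixpoint :
  seteq (preRel lo hi Rl (preIter_meet lo hi Rl)) (preIter_meet lo hi Rl).
Proof.
  intros w; split.
  - intros [Hw [w1 [Hw1 Hr]]] [|i]; [exact Hw|].
    split; [exact Hw|]; exists w1; split; [apply Hw1 | exact Hr].
  - intros Hw; split; [apply (Hw O) | apply preIter_meet_successor, Hw].
Qed.

Lemma preIter_meet_iterForever :
  seteq (preIter_meet lo hi Rl) (fun w0 => Eset lo hi w0 /\ iterForever Rl w0).
Proof.
  intros w; split.
  - intros Hw; split; [apply (Hw O)|].
    destruct (choice (fun x y => preIter_meet lo hi Rl x -> preIter_meet lo hi Rl y /\ Rl x y))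
      as [next Hnext].
    { intros x; destruct (classic (preIter_meet lo hi Rl x)) as [Hx|Hx].
      - destruct (preIter_meet_successor x Hx) as [y Hy]; exists y; auto.
      - exists x; tauto. }
    assert (Hiter : forall n, preIter_meet lo hi Rl (Nat.iter n next w))
      by (induction n as [|n IH]; [exact Hw | apply (Hnext _ IH)]).
    exists (fun n => Nat.iter n next w); split; [reflexivity|].
    intros i; apply (Hnext _ (Hiter i)).
  - revert w; apply post_fixpoint_sub_preIter_meet; [intros x [Hx _]; exact Hx|].
    intros x [Hx [c [Hc0 Hc]]]; exists (c 1%nat); split.
    + split; [apply (Rl_inE _ _ (Hc O)) | exists (fun n => c (S n)); split; auto].
    + rewrite <- Hc0; apply Hc.
Qed.

End GreatestFixpoint.

Theorem mainTheorem3 (lo hi : Q) (Rl : R -> R -> Prop) :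
  isEnergyRel lo hi Rl ->
  exists nu : R -> Prop,
    closedSubint lo hi nu /\
    seteq (preRel lo hi Rl nu) nu /\
    (forall J, closedSubint lo hi J -> seteq (preRel lo hi Rl J) J -> subset J nu) /\
    seteq nu (fun w => forall i : nat, preIter lo hi Rl i w) /\
    (subset nu (Eset lo hi) /\
     (forall w0, nu w0 -> exists w1, nu w1 /\ Rl w0 w1)) /\
    (forall S : R -> Prop, subset S (Eset lo hi) ->
       (forall w0, S w0 -> exists w1, S w1 /\ Rl w0 w1) -> subset S nu) /\
    seteq nu (fun w0 => Eset lo hi w0 /\ iterForever Rl w0).
Proof.
  intros HRl.
  pose proof (isEnergyRel_polyhedral _ _ _ HRl) as Hpoly.
  pose proof (isEnergyRel_inE _ _ _ HRl) as HinE.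
  exists (preIter_meet lo hi Rl).
  split; [exact (preIter_meet_closedSubint _ _ _ Hpoly)|].
  split; [exact (preIter_meet_fixpoint _ _ _ Hpoly)|].
  split.
  { intros J _ HJ; apply post_fixpoint_sub_preIter_meet.
    - intros x Hx; apply HJ, Hx.
    - intros w0 Hw0; apply HJ in Hw0 as [_ [w1 [Hw1 Hr]]]; eauto. }
  split; [intros w; reflexivity|].
  split; [split; [intros x Hx; apply (Hx O) | exact (preIter_meet_successor _ _ _ Hpoly)]|].
  split; [exact (post_fixpoint_sub_preIter_meet lo hi Rl)|].
  exact (preIter_meet_iterForever _ _ _ Hpoly HinE).
Qed.
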